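(* In the model described in the context (with any $n$, $k$, $r$, $p$, $\epsilon$), let $p_b:=\frac{(1-\epsilon)^2}{2}$. Then for every $\delta\in(0,1)$, $$\Pr\Big[\max_{i\notin A_1} s_{1i}\ge np_b(1+\delta)^2\Big]\le (n-k)\,e^{-np_b\delta^2/3}+2r\,e^{-r\delta^2/6}.$$
   Context: Model: $\mathbf X$ is an $n\times n$ binary matrix. Let $\{A_i\}_{i=1}^r$ be a partition of the row indices and $\{B_i\}_{i=1}^r$ a partition of the column indices, with $|A_i|=|B_i|=k$ for all $i$ (so $n=rk$). Let $\xi_{ij}$, $1\le i,j\le r$, be i.i.d. Bernoulli$(1/2)$, and set $\mathbf X(a,b)=\xi_{ij}$ whenever $(a,b)\in A_i\times B_j$. The observed matrix $\mathbf Y$ with entries in $\{0,1,*\}$ is obtained by passing each entry of $\mathbf X$ independently through a binary symmetric channel with crossover probability $p\in[0,1/2)$, and then independently erasing each entry (replacing it with $*$) with probability $\epsilon\in[0,1)$. Row 1 belongs to $A_1$. Similarity: $s_{ij}=\sum_{l=1}^n \mathbf 1\{\mathbf Y(i,l)\ne *\}\mathbf 1\{\mathbf Y(j,l)\ne *\}\mathbf 1\{\mathbf Y(i,l)=\mathbf Y(j,l)\}$. *)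

From HB Require Import structures.
From mathcomp Require Import all_boot all_order all_algebra.
From mathcomp Require Import reals.
From mathcomp Require Import sequences exp.
Set Implicit Arguments. Unset Strict Implicit. Unset Printing Implicit Defensive.
Import Order.TTheory GRing.Theory Num.Theory.
Local Open Scope ring_scope.

(* Finite sample space: block labels xi (r x r), BSC flips (n x n), erasures (n x n). *)
Definition Omega (r n : nat) : finType :=
  ({ffun 'I_r * 'I_r -> bool} * {ffun 'I_n * 'I_n -> bool} * {ffun 'I_n * 'I_n -> bool})%type.

Definition bern (R : realType) (q : R) (b : bool) : R := if b then q else 1 - q.

Definition weight (R : realType) (r n : nat) (p eps : R) (w : Omega r n) : R :=
  (\prod_(ij : 'I_r * 'I_r) bern (1/2) (w.1.1 ij)) *
  (\prod_(uv : 'I_n * 'I_n) bern p (w.1.2 uv)) *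
  (\prod_(uv : 'I_n * 'I_n) bern eps (w.2 uv)).

Definition Prob (R : realType) (r n : nat) (p eps : R) (E : pred (Omega r n)) : R :=
  \sum_(w : Omega r n | E w) weight p eps w.

(* a u = block index i with u \in A_i ; b v = block index j with v \in B_j *)
Definition Xmat (r n : nat) (a b : 'I_n -> 'I_r) (w : Omega r n) (u v : 'I_n) : bool :=
  w.1.1 (a u, b v).

(* observed entry: None stands for the erasure symbol * *)
Definition Ymat (r n : nat) (a b : 'I_n -> 'I_r) (w : Omega r n) (u v : 'I_n)
  : option bool :=
  if w.2 (u, v) then None else Some (addb (Xmat a b w u v) (w.1.2 (u, v))).

Definition sim (r n : nat) (a b : 'I_n -> 'I_r) (w : Omega r n) (i j : 'I_n) : nat :=
  (\sum_(l < n)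
     [&& Ymat a b w i l != None, Ymat a b w j l != None & Ymat a b w i l == Ymat a b w j l])%N.

From HB Require Import structures.
From mathcomp Require Import all_boot all_order all_algebra.
From mathcomp Require Import reals ring lra.
From mathcomp Require Import sequences exp.
From mathcomp Require Import boolp classical_sets functions topology normedtype derive.
Import Order.TTheory GRing.Theory Num.Theory numFieldNormedType.Exports.
Local Open Scope ring_scope.

(* Union bound over the outsiders [i] (rows with [a i <> a i0]).  For a block
   [t <> a i0] let [M_t] be the number of column blocks [j] on which the labels
   [xi (a i0) j] and [xi t j] coincide: a Binomial(r, 1/2) variable, so a
   Chernoff bound makes [M_t > r (1 + delta) / 2] unlikely for each of the fewer
   than [r] such blocks.  Otherwise [M_(a i)] is small and [s_(i0, i)] must be
   large.  Given the labels, the agreements in a column block are i.i.d., with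
   probability [(1 - eps)^2 (p^2 + (1 - p)^2)] when the two labels coincide and
   [(1 - eps)^2 2p(1 - p)] when they differ.  A joint exponential moment
   [E exp (lam s - nu M)], with [nu] chosen to balance these two cases, then
   behaves like that of a binomial variable of mean [n pb (1 + delta)], and
   Markov's inequality with [lam = 3 delta / 5] gives [exp (- n pb delta^2 / 3)]
   for each outsider. *)

Section RealBounds.
Context {R : realType}.

(* The (1,1) Pade bound, proved by the mean value theorem: the derivative of
   [expR y * (2 - y) - (2 + y)] is [expR y * (1 - y) - 1 <= 0]. *)
Lemma expR_le_pade (x : R) : 0 <= x -> x < 2 -> expR x * (2 - x) <= 2 + x.
Proof.
move=> x0 x2.
pose f : R -> R := (expR * (cst 2 - id)) - (cst 2 + id).
pose df : R -> R := fun y => expR y * (1 - y) - 1.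
have f_deriv (y : R) : is_derive y (1:R) f (df y).
  apply: is_derive_eq.
  change (expR y * (0 - 1) + (2 - y) * expR y - (0 + 1) = df y).
  by rewrite /df; ring.
have df_le0 (y : R) : df y <= 0.
  rewrite /df subr_le0 -(@ler_pM2l _ (expR (- y))) ?expR_gt0 // mulrA -expRD.
  by rewrite addNr expR0 mul1r mulr1; apply: expR_ge1Dx.
have [->|xpos] := eqVneq x 0; first by rewrite expR0; lra.
have {xpos}xpos : 0 < x by rewrite lt_neqAle eq_sym xpos.
have [c _ fxE] := @MVT R f df 0 x xpos (fun y _ => f_deriv y)
  (derivable_within_continuous (fun y _ => let: DeriveDef h _ := f_deriv y in h)).
have : f x - f 0 <= 0 by rewrite fxE; apply: mulr_le0_ge0 => //; lra.
rewrite /f !fctE expR0.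
by lra.
Qed.

Lemma chernoff_exponent (mu d : R) : 0 <= mu -> 0 < d -> d < 1 ->
  - (3 * d / 5) * ((1 + d) * mu) + (expR (3 * d / 5) - 1) * mu <= - (mu * d ^+ 2 / 3).
Proof.
move=> mu0 d0 d1.
have := @expR_le_pade (3 * d / 5) ltac:(lra) ltac:(lra).
set E := expR (3 * d / 5) => pade.
have E_le : E - 1 <= 6 * d / (10 - 3 * d).
  by rewrite ler_pdivlMr; lra.
have frac_le : 6 * d / (10 - 3 * d) <= 6 * d / 10 + d ^+ 2 * 13 / 50.
  by rewrite ler_pdivrMr; [nra | lra].
have : - (3 * d / 5) * (1 + d) + (E - 1) + d ^+ 2 / 3 <= 0 by nra.
by move/(mulr_ge0_le0 mu0); lra.
Qed.

(* Chernoff's method with [lam = 3 d / 5]: if [m] bounds the exponential moment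
   [E (expR (lam X))] of a variable with mean at most [mu], Markov's inequality
   bounds [P (X >= (1 + d) mu)] by the left-hand side. *)
Lemma chernoff_bound (mu d m : R) : 0 <= mu -> 0 < d -> d < 1 ->
  m <= expR ((expR (3 * d / 5) - 1) * mu) ->
  expR (- (3 * d / 5 * ((1 + d) * mu))) * m <= expR (- (mu * d ^+ 2 / 3)).
Proof.
move=> mu0 d0 d1 m_le.
apply: le_trans (ler_wpM2l (expR_ge0 _) m_le) _.
by rewrite -expRD ler_expR -mulNr; apply: chernoff_exponent.
Qed.

Lemma ler_indicator_expR (lam t x : R) : 0 <= lam ->
  ((t <= x)%R%:R : R) <= expR (lam * (x - t)).
Proof.
move=> lam0; have [tx|_] := lerP t x; last exact: expR_ge0.
by apply: le_trans (expR_ge1Dx _); rewrite lerDl; apply: mulr_ge0; lra.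
Qed.

Lemma ler_indicator_lt_expR (lam t x : R) : 0 <= lam ->
  ((t < x)%R%:R : R) <= expR (lam * (x - t)).
Proof.
move=> lam0; apply: le_trans _ (@ler_indicator_expR lam t x lam0).
by have [/ltW ->|_] := ltrP t x; rewrite ?ler0n.
Qed.

Lemma expR_mul_indicator (l : R) (b : bool) : expR (l * b%:R) = 1 + (expR l - 1) * b%:R.
Proof. by case: b; rewrite /= ?mulr1 ?mulr0 ?expR0; ring. Qed.


(* The weight [nu] is tuned to balance the two branches of the mixture:
   [expR (- nu) * (1 + xA) ^+ k = (1 + xB) ^+ k]. *)
Lemma mixture_mgf_bound (k r : nat) (delta xA xB : R) :
  0 <= delta <= 1 -> 0 <= xB <= xA ->
  exists2 nu, 0 <= nu &
    expR (nu * (r%:R * (1 + delta) / 2)) *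
      (1/2 * (expR (- nu) * (1 + xA) ^+ k) + 1/2 * (1 + xB) ^+ k) ^+ r
    <= expR ((r * k)%:R * ((1 + delta) * xA + (1 - delta) * xB) / 2).
Proof.
move=> /andP[d0 d1] /andP[xB0 xBA].
have xA0 : 0 <= xA := le_trans xB0 xBA.
have lnK1 (x : R) : 0 <= x -> expR (ln (1 + x)) = 1 + x.
  by move=> x0; rewrite lnK // posrE; lra.
have ln1_le (x : R) : 0 <= x -> ln (1 + x) <= x.
  by move=> x0; rewrite -ler_expR lnK1 // expR_ge1Dx.
set al := ln (1 + xA); set be := ln (1 + xB).
have be_al : be <= al by rewrite -ler_expR !lnK1 //; lra.
exists (k%:R * (al - be)); first by rewrite mulr_ge0 ?subr_ge0.
rewrite -(lnK1 xA xA0) -(lnK1 xB xB0) -/al -/be.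
rewrite -[expR al ^+ k]expRM_natl -[expR be ^+ k]expRM_natl -expRD.
have -> : - (k%:R * (al - be)) + k%:R * al = k%:R * be by ring.
rewrite -mulrDl -splitr mul1r -[expR _ ^+ r]expRM_natl -expRD ler_expR natrM.
rewrite [leLHS](_ : _ = r%:R * k%:R * ((1 + delta) * al + (1 - delta) * be) / 2).
  by rewrite ler_pM2r ?invr_gt0 // ler_wpM2l ?mulr_ge0 //; apply: lerD;
     apply: ler_wpM2l; rewrite ?ln1_le //; lra.
by field.
Qed.

End RealBounds.

Section ProductBernoulli.
Context {R : realType} {C : finType} {q : C -> R}.
Hypothesis q01 : forall c, 0 <= q c <= 1.

Definition bweight (x : {ffun C -> bool}) : R := \prod_c bern (q c) (x c).
Definition expect (F : {ffun C -> bool} -> R) : R := \sum_x bweight x * F x.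

Definition depends_on (S : pred C) (F : {ffun C -> bool} -> R) :=
  forall x y : {ffun C -> bool}, (forall c, S c -> x c = y c) -> F x = F y.

Lemma bweight_ge0 x : 0 <= bweight x.
Proof.
by apply: prodr_ge0 => c _; have := q01 c; case: (x c) => /andP[? ?] /=; lra.
Qed.

Lemma eq_expect F G : F =1 G -> expect F = expect G.
Proof. by move=> FG; apply: eq_bigr => x _; rewrite FG. Qed.

Lemma ler_expect F G : (forall x, F x <= G x) -> expect F <= expect G.
Proof. by move=> FG; apply: ler_sum => x _; rewrite ler_wpM2l ?bweight_ge0. Qed.

Lemma expectD F G : expect (fun x => F x + G x) = expect F + expect G.
Proof. by rewrite /expect -big_split; apply: eq_bigr => x _; rewrite mulrDr. Qed.

Lemma expectZ k F : expect (fun x => k * F x) = k * expect F.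
Proof. by rewrite /expect mulr_sumr; apply: eq_bigr => x _; rewrite mulrCA. Qed.

Lemma expect_sum (I : finType) (P : pred I) (F : I -> {ffun C -> bool} -> R) :
  expect (fun x => \sum_(i | P i) F i x) = \sum_(i | P i) expect (F i).
Proof. by rewrite /expect exchange_big; apply: eq_bigr => x _; rewrite mulr_sumr. Qed.

Lemma expect_prod_coord (h : C -> bool -> R) :
  expect (fun x => \prod_c h c (x c)) = \prod_c (q c * h c true + (1 - q c) * h c false).
Proof.
transitivity (\prod_c \sum_(b : bool) bern (q c) b * h c b); last first.
  by apply: eq_bigr => c _; rewrite big_bool.
rewrite bigA_distr_bigA; apply: eq_bigr => x _.
by rewrite /bweight -big_split.
Qed.

Lemma expect1 : expect (fun => 1) = 1.
Proof.
rewrite (@eq_expect _ (fun x => \prod_c (fun _ _ => 1) c (x c))); last first.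
  by move=> x; rewrite big1.
by rewrite (expect_prod_coord (fun _ _ => 1)) big1 // => c _; ring.
Qed.

Lemma expect_cst k : expect (fun => k) = k.
Proof. by rewrite -[RHS]mulr1 -expect1 -expectZ; apply: eq_expect => x; rewrite mulr1. Qed.

Lemma expect_coord c0 (g : bool -> R) :
  expect (fun x => g (x c0)) = q c0 * g true + (1 - q c0) * g false.
Proof.
pose h c b := if c == c0 then g b else 1.
rewrite (@eq_expect _ (fun x => \prod_c h c (x c))); last first.
  by move=> x; rewrite (bigD1 c0) //= /h eqxx big1 ?mulr1 // => c /negbTE ->.
by rewrite (expect_prod_coord h) (bigD1 c0) //= /h eqxx big1 ?mulr1 // => c /negbTE ->; ring.
Qed.

Definition merge (S : pred C) (x y : {ffun C -> bool}) : {ffun C -> bool} :=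
  [ffun c => if S c then x c else y c].

Lemma bweight_merge S x y :
  bweight x * bweight y = bweight (merge S x y) * bweight (merge S y x).
Proof.
rewrite /bweight -!big_split; apply: eq_bigr => c _; rewrite !ffunE.
by case: (S c) => //; apply: mulrC.
Qed.

Lemma mergeK S x y : merge S (merge S x y) (merge S y x) = x.
Proof. by apply/ffunP => c; rewrite !ffunE; case: (S c). Qed.

(* Swapping the [S]-coordinates of two configurations is a weight-preserving
   involution of pairs, which turns the product of sums into a sum of products. *)
Lemma expect_indep S F G : depends_on S F -> depends_on (predC S) G ->
  expect (fun x => F x * G x) = expect F * expect G.
Proof.
move=> dF dG; pose swap p := (merge S p.1 p.2, merge S p.2 p.1).
have swap_inj : injective swap.
  move=> [x1 y1] [x2 y2]; rewrite /swap /= => -[e1 e2].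
  have := mergeK S x1 y1; have := mergeK S y1 x1; rewrite e1 e2 !mergeK.
  by move=> -> ->.
pose H p := bweight p.1 * bweight p.2 * (F p.1 * G p.1).
have -> : expect F * expect G = \sum_p H (swap p).
  rewrite /expect mulr_suml; under eq_bigr => x _ do rewrite mulr_sumr.
  rewrite pair_bigA; apply: eq_bigr => -[x y] _ /=.
  rewrite /H /= -bweight_merge (dF x (merge S x y)); last by move=> c Sc; rewrite ffunE Sc.
  by rewrite (dG y (merge S x y)) => [|c /negbTE Sc]; rewrite ?ffunE ?Sc //; ring.
rewrite -(@reindex_inj _ _ _ _ _ xpredT H swap_inj).
rewrite -(pair_bigA _ (fun x y => H (x, y))) /=; apply: eq_bigr => x _.
have total : \sum_y bweight y = 1.
  by rewrite -[RHS]expect1; apply: eq_bigr => y _; rewrite mulr1.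
by rewrite -[LHS]mulr1 -total mulr_sumr; apply: eq_bigr => y _; rewrite /H /=; ring.
Qed.

Lemma expect_prod (I : finType) (P : pred I) (S : I -> pred C)
    (G : I -> {ffun C -> bool} -> R) :
  (forall i, depends_on (S i) (G i)) -> (forall i j c, S i c -> S j c -> i = j) ->
  expect (fun x => \prod_(i | P i) G i x) = \prod_(i | P i) expect (G i).
Proof.
move=> dG disj; have := index_enum_uniq I.
elim: (index_enum I) => [_|i s IH /andP[i_notin_s s_uniq]].
  by rewrite big_nil -[RHS]expect1; apply: eq_expect => x; rewrite big_nil.
rewrite big_cons -IH //; case: ifP => Pi; last first.
  by apply: eq_expect => x; rewrite big_cons Pi.
rewrite -(@expect_indep (S i) (G i) (fun x => \prod_(j <- s | P j) G j x) (dG i)).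
  by apply: eq_expect => x; rewrite big_cons Pi.
move=> x y xy; rewrite !(big_seq_cond P); apply: eq_bigr => j /andP[j_in_s _].
apply: dG => c Sjc; apply: xy; apply/negP => Sic.
by move: i_notin_s; rewrite (disj i j c Sic Sjc) j_in_s.
Qed.

Lemma expect_mul_coord c (g : bool -> R) G : depends_on (predC (pred1 c)) G ->
  expect (fun x => g (x c) * G x) = expect (fun x => g (x c)) * expect G.
Proof. by apply: expect_indep => x y xy; rewrite xy //= eqxx. Qed.

Lemma expect_coord_eq c1 c2 (d : bool) : c1 != c2 -> q c1 = q c2 ->
  expect (fun x => ((x c1 == x c2) == d)%:R) =
  if d then q c1 ^+ 2 + (1 - q c1) ^+ 2 else 2 * q c1 * (1 - q c1).
Proof.
move=> c12 q12; pose g (b0 b : bool) : R := (b == b0)%:R.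
rewrite (@eq_expect _ (fun x =>
    g true (x c1) * g d (x c2) + g false (x c1) * g (~~ d) (x c2))).
  have dep2 b0 : depends_on (predC (pred1 c1)) (fun x => g b0 (x c2)).
    by move=> x y xy; rewrite xy //= eq_sym.
  rewrite expectD !expect_mul_coord // !expect_coord -q12 /g.
  by case: d => /=; ring.
by move=> x; rewrite /g; case: (x c1); case: (x c2); case: d => /=; ring.
Qed.
End ProductBernoulli.
Arguments bweight {R C} q x.
Arguments expect {R C} q F.

Section Model.
Variables (R : realType) (r n : nat) (p eps : R).
Hypotheses (p01 : 0 <= p <= 1) (eps01 : 0 <= eps <= 1).

Definition site : finType := ('I_r * 'I_r + 'I_n * 'I_n + 'I_n * 'I_n)%type.

Definition site_prob (c : site) : R :=
  match c with inl (inl _) => 1/2 | inl (inr _) => p | inr _ => eps end.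

Lemma site_prob01 c : 0 <= site_prob c <= 1.
Proof. by case: c => [[?|?]|?] //=; lra. Qed.

Definition omega_of (x : {ffun site -> bool}) : Omega r n :=
  ([ffun ij => x (inl (inl ij))], [ffun uv => x (inl (inr uv))], [ffun uv => x (inr uv)]).

Definition coords_of (w : Omega r n) : {ffun site -> bool} :=
  [ffun c => match c with
             | inl (inl ij) => w.1.1 ij | inl (inr uv) => w.1.2 uv | inr uv => w.2 uv end].

Lemma omega_ofK : cancel omega_of coords_of.
Proof. by move=> x; apply/ffunP => -[[?|?]|?]; rewrite !ffunE. Qed.

Lemma coords_ofK : cancel coords_of omega_of.
Proof.
by move=> [[x y] z]; congr (_, _, _); apply/ffunP => ?; rewrite !ffunE.
Qed.

Lemma weight_coords w : weight p eps w = bweight site_prob (coords_of w).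
Proof.
rewrite /weight /bweight !big_sumType /=.
by congr (_ * _ * _); apply: eq_bigr => ? _; rewrite ffunE.
Qed.

Lemma Prob_expect (E : pred (Omega r n)) :
  Prob p eps E = expect site_prob (fun x => (E (omega_of x))%:R).
Proof.
rewrite /Prob /expect big_mkcond (reindex omega_of); last first.
  by exists coords_of => x _; [apply: omega_ofK | apply: coords_ofK].
apply: eq_bigr => x _; rewrite weight_coords omega_ofK.
by case: (E _); rewrite ?mulr1 ?mulr0.
Qed.

Definition label (x : {ffun site -> bool}) t j := x (inl (inl (t, j))).
Definition flipped (x : {ffun site -> bool}) u l := x (inl (inr (u, l))).
Definition erased (x : {ffun site -> bool}) u l := x (inr (u, l)).

End Model.
Arguments site_prob {R} r n p eps c.
Arguments site_prob01 {R r n p eps} p01 eps01 c.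
Arguments omega_of {r n} x.
Arguments label {r n} x t j.
Arguments flipped {r n} x u l.
Arguments erased {r n} x u l.

Section Similarity.
Context {R : realType} {r k n : nat} (p eps : R).
Hypotheses (p01 : 0 <= p <= 1) (eps01 : 0 <= eps <= 1).
Variables (a b : 'I_n -> 'I_r) (i0 : 'I_n).

Local Notation E := (expect (site_prob r n p eps)).
Local Notation coords := {ffun site r n -> bool}.
Let prob01 := @site_prob01 R r n p eps p01 eps01.

Definition same_label (x : coords) t j : bool := label x (a i0) j == label x t j.

Definition matches (x : coords) t : nat := \sum_(j < r) same_label x t j.

(* Since [Y = X xor flip], two unerased entries agree iff their flips agree
   exactly when their labels do. *)
Definition agree (x : coords) i l : bool :=
  [&& ~~ erased x i0 l, ~~ erased x i l &
      (flipped x i0 l == flipped x i l) == same_label x (a i) (b l)].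

Lemma sim_agree x i : sim a b (omega_of x) i0 i = (\sum_(l < n) agree x i l)%N.
Proof.
apply: eq_bigr => l _.
rewrite /agree /same_label /Ymat /Xmat /omega_of /label /flipped /erased /= !ffunE.
case: (x (inr (i0, l))); case: (x (inr (i, l))) => //=.
by case: (x (inl (inl (a i0, b l)))); case: (x (inl (inl (a i, b l))));
   case: (x (inl (inr (i0, l)))); case: (x (inl (inr (i, l)))).
Qed.

Lemma expect_same_label t j : t != a i0 -> E (fun x => (same_label x t j)%:R) = 1/2.
Proof.
move=> t_neq; pose c1 : site r n := inl (inl (a i0, j)).
pose c2 : site r n := inl (inl (t, j)).
rewrite (@eq_expect _ _ _ _ (fun x => ((x c1 == x c2) == true)%:R)); last first.
  by move=> x; rewrite eqb_id.
rewrite expect_coord_eq //=; first lra.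
by apply/eqP => -[] /eqP; rewrite eq_sym (negbTE t_neq).
Qed.

Definition label_site (j : 'I_r) (c : site r n) : bool :=
  if c is inl (inl (_, v)) then v == j else false.

Lemma expect_expR_matches lam t : t != a i0 ->
  E (fun x => expR (lam * (matches x t)%:R)) <= expR ((expR lam - 1) * (r%:R / 2)).
Proof.
move=> t_neq.
rewrite (@eq_expect _ _ _ _ (fun x => \prod_(j < r) expR (lam * (same_label x t j)%:R))); last first.
  by move=> x; rewrite -expR_sum /matches natr_sum mulr_sumr.
rewrite (@expect_prod _ _ _ _ xpredT label_site); first last.
- by move=> j1 j2 [[[u v]|]|] //= /eqP -> /eqP.
- by move=> j x y xy; rewrite /same_label /label !xy //= eqxx.
under eq_bigr => j _.
  rewrite (@eq_expect _ _ _ _ (fun x => 1 + (expR lam - 1) * (same_label x t j)%:R)); last first.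
    by move=> x; rewrite expR_mul_indicator.
  rewrite expectD expect_cst expectZ expect_same_label //.
  over.
rewrite prodr_const card_ord mul1r.
have -> : (expR lam - 1) * (r%:R / 2) = r%:R * ((expR lam - 1) / 2) by ring.
rewrite expRM_natl; apply: lerXn2r; rewrite ?nnegrE ?expR_ge0 ?expR_ge1Dx //.
by have := expR_gt0 lam; lra.
Qed.


Lemma matches_tail delta t : 0 < delta -> delta < 1 -> t != a i0 ->
  E (fun x => (r%:R * (1 + delta) / 2 < (matches x t)%:R)%R%:R)
  <= expR (- (r%:R * delta ^+ 2 / 6)).
Proof.
move=> d0 d1 t_neq; set lam := 3 * delta / 5.
have lam0 : 0 <= lam by rewrite /lam; lra.
apply: le_trans (@ler_expect _ _ _ prob01 _
  (fun x => expR (- (lam * ((1 + delta) * (r%:R / 2)))) *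
            expR (lam * (matches x t)%:R)) _) _.
  move=> x; rewrite -expRD [X in expR X](_ : _ = lam * ((matches x t)%:R
    - r%:R * (1 + delta) / 2)); last by ring.
  exact: ler_indicator_lt_expR.
rewrite expectZ.
have -> : r%:R * delta ^+ 2 / 6 = r%:R / 2 * delta ^+ 2 / 3 by field.
apply: chernoff_bound => //; first by rewrite divr_ge0.
exact: expect_expR_matches.
Qed.

Hypothesis b_card : forall t : 'I_r, #|[pred v | b v == t]| = k.

Definition agree_given (d : bool) (x : coords) i l : bool :=
  [&& ~~ erased x i0 l, ~~ erased x i l & (flipped x i0 l == flipped x i l) == d].

Definition agree_prob (d : bool) : R :=
  (1 - eps) ^+ 2 * (if d then p ^+ 2 + (1 - p) ^+ 2 else 2 * p * (1 - p)).

Lemma expect_agree_given d i l : i != i0 ->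
  E (fun x => (agree_given d x i l)%:R) = agree_prob d.
Proof.
move=> i_neq; pose c0 : site r n := inr (i0, l); pose c : site r n := inr (i, l).
pose f0 : site r n := inl (inr (i0, l)); pose f : site r n := inl (inr (i, l)).
have c_neq : c != c0 by apply: contraNneq i_neq => -[->].
have f_neq : f0 != f by apply: contraNneq i_neq => -[->].
rewrite (@eq_expect _ _ _ _ (fun x => (x c0 == false)%:R *
    ((x c == false)%:R * ((x f0 == x f) == d)%:R))); last first.
  move=> x; rewrite /agree_given /erased /flipped -/c0 -/c -/f0 -/f.
  by case: (x c0); case: (x c) => /=; rewrite ?mul1r ?mul0r ?mulr0.
pose erased0 (b : bool) : R := (b == false)%:R.
rewrite (expect_mul_coord c0 erased0); last first.
  by move=> x y xy; rewrite !xy //= eq_sym ?c_neq.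
rewrite (expect_mul_coord c erased0); last by move=> x y xy; rewrite !xy.
by rewrite !expect_coord expect_coord_eq //= /erased0 /agree_prob; case: d => /=; ring.
Qed.

Definition column_site (l : 'I_n) (c : site r n) : bool :=
  match c with inl (inr (_, m)) | inr (_, m) => m == l | _ => false end.

Lemma expect_block_agree lam d j i : i != i0 ->
  E (fun x => \prod_(l | b l == j) expR (lam * (agree_given d x i l)%:R))
  = (1 + (expR lam - 1) * agree_prob d) ^+ k.
Proof.
move=> i_neq; rewrite (@expect_prod _ _ _ _ _ column_site); first last.
- by move=> l1 l2 [[|[u v]]|[u v]] //= /eqP -> /eqP.
- move=> l x y xy; rewrite /agree_given /erased /flipped.
  by rewrite !xy //= eqxx.
rewrite -(b_card j) -prodr_const; apply: eq_big => [l|l _]; first by rewrite inE.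
rewrite (@eq_expect _ _ _ _ (fun x => 1 + (expR lam - 1) * (agree_given d x i l)%:R)).
  by rewrite expectD expect_cst expectZ expect_agree_given.
by move=> x; rewrite expR_mul_indicator.
Qed.

Definition block_factor lam nu (j : 'I_r) i (x : coords) : R :=
  expR (- (nu * (same_label x (a i) j)%:R)) *
  \prod_(l | b l == j) expR (lam * (agree x i l)%:R).

Lemma expect_block_factor lam nu j i : a i != a i0 ->
  E (block_factor lam nu j i) =
  1/2 * (expR (- nu) * (1 + (expR lam - 1) * agree_prob true) ^+ k)
  + 1/2 * (1 + (expR lam - 1) * agree_prob false) ^+ k.
Proof.
move=> ai_neq; have i_neq : i != i0 by apply: contraNneq ai_neq => ->.
pose H d x := \prod_(l | b l == j) expR (lam * (agree_given d x i l)%:R).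
pose D x := same_label x (a i) j.
rewrite (@eq_expect _ _ _ _ (fun x => (D x)%:R * (expR (- nu) * H true x)
                                   + (~~ D x)%:R * H false x)); last first.
  move=> x; rewrite /block_factor /H -/(D x).
  have -> : \prod_(l | b l == j) expR (lam * (agree x i l)%:R) = H (D x) x.
    by apply: eq_bigr => l /eqP bl; rewrite /agree bl.
  by case: (D x); rewrite /= ?mulr1 ?mulr0 ?oppr0 ?expR0 ?mul1r ?mul0r ?addr0 ?add0r.
pose label_sites (c : site r n) : bool := if c is inl (inl _) then true else false.
have dep_D (g : bool -> R) : depends_on label_sites (fun x => g (D x)).
  by move=> x y xy; rewrite /D /same_label /label !xy.
have dep_H d : depends_on (predC label_sites) (H d).
  move=> x y xy; apply: eq_bigr => l _.
  by rewrite /agree_given /erased /flipped !xy.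
rewrite expectD (expect_indep _ _ _ (dep_D (fun d => d%:R))); last first.
  by move=> x y xy; rewrite (dep_H true x y xy).
rewrite (expect_indep _ _ _ (dep_D (fun d => (~~ d)%:R)) (dep_H false)).
rewrite expectZ !expect_block_agree // expect_same_label //.
rewrite (@eq_expect _ _ _ _ (fun x => 1 + (-1) * (D x)%:R)); last first.
  by move=> x; case: (D x) => /=; ring.
by rewrite expectD expect_cst expectZ expect_same_label //; congr (_ + _); field.
Qed.

Lemma prod_block_factor lam nu i x :
  \prod_(j < r) block_factor lam nu j i x =
  expR (lam * (\sum_(l < n) agree x i l)%N%:R - nu * (matches x (a i))%:R).
Proof.
rewrite /block_factor big_split /= mulrC expRD; congr (_ * _).
  rewrite natr_sum mulr_sumr (partition_big b xpredT) //= expR_sum.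
  by apply: eq_bigr => j _; rewrite expR_sum.
by rewrite /matches natr_sum mulr_sumr -sumrN expR_sum.
Qed.

Definition block_site (j : 'I_r) (c : site r n) : bool :=
  match c with inl (inl (_, v)) => v == j | inl (inr (_, m)) | inr (_, m) => b m == j end.

Hypothesis n_eq : n = (r * k)%N.

Lemma agree_matches_mgf_bound lam delta i : 0 <= lam -> 0 <= delta <= 1 -> a i != a i0 ->
  exists2 nu, 0 <= nu &
    expR (nu * (r%:R * (1 + delta) / 2)) *
      E (fun x => expR (lam * (\sum_(l < n) agree x i l)%N%:R - nu * (matches x (a i))%:R))
    <= expR ((expR lam - 1) * ((1 + delta) * (n%:R * ((1 - eps) ^+ 2 / 2)))).
Proof.
move=> lam0 d01 ai_neq; have i_neq : i != i0 by apply: contraNneq ai_neq => ->.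
have eps_sq0 : 0 <= (1 - eps) ^+ 2 := sqr_ge0 _.
have e0 : 0 <= expR lam - 1 by have := expR_ge1Dx lam; lra.
have [p0 p1] := andP p01; have [eps0 eps1] := andP eps01.
pose xA := (expR lam - 1) * agree_prob true.
pose xB := (expR lam - 1) * agree_prob false.
have xB0 : 0 <= xB by rewrite /xB /agree_prob !mulr_ge0 //; lra.
have xBA : xB <= xA.
  rewrite /xA /xB /agree_prob ler_wpM2l // ler_wpM2l //= -subr_ge0.
  have -> : p ^+ 2 + (1 - p) ^+ 2 - 2 * p * (1 - p) = (1 - 2 * p) ^+ 2 by ring.
  exact: sqr_ge0.
have xB0A : 0 <= xB <= xA by rewrite xB0 xBA.
have [nu nu0 mixture] := @mixture_mgf_bound _ k r _ _ _ d01 xB0A.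
exists nu => //.
rewrite (@eq_expect _ _ _ _ (fun x => \prod_(j < r) block_factor lam nu j i x)); last first.
  by move=> x; rewrite prod_block_factor.
rewrite (@expect_prod _ _ _ _ _ block_site); first last.
- by move=> j1 j2 [[[u v]|[u v]]|[u v]] /= /eqP -> /eqP.
- move=> j x y xy; rewrite /block_factor; congr (_ * _).
    by rewrite /same_label /label !xy //= eqxx.
  apply: eq_bigr => l /eqP bl; rewrite /agree /same_label /erased /flipped /label.
  by rewrite !xy //= bl eqxx.
under eq_bigr => j _ do rewrite expect_block_factor //.
rewrite prodr_const card_ord; apply: le_trans mixture _.
rewrite ler_expR -n_eq -subr_ge0.
have -> : (expR lam - 1) * ((1 + delta) * (n%:R * ((1 - eps) ^+ 2 / 2)))
    - n%:R * ((1 + delta) * xA + (1 - delta) * xB) / 2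
    = 2 * n%:R * (expR lam - 1) * (1 - eps) ^+ 2 * delta * (p * (1 - p)).
  by rewrite /xA /xB /agree_prob /=; field.
by have [d0 _] := andP d01; rewrite !mulr_ge0 //; lra.
Qed.


Lemma agree_tail_few_matches delta i : 0 < delta -> delta < 1 -> a i != a i0 ->
  E (fun x => ((n%:R * ((1 - eps) ^+ 2 / 2) * (1 + delta) ^+ 2
                 <= (\sum_(l < n) agree x i l)%N%:R)
              && ((matches x (a i))%:R <= r%:R * (1 + delta) / 2))%R%:R)
  <= expR (- (n%:R * ((1 - eps) ^+ 2 / 2) * delta ^+ 2 / 3)).
Proof.
move=> d0 d1 ai_neq; set lam := 3 * delta / 5; set pbn := n%:R * ((1 - eps) ^+ 2 / 2).
have lam0 : 0 <= lam by rewrite /lam; lra.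
have pbn0 : 0 <= pbn by rewrite /pbn mulr_ge0 ?divr_ge0 ?sqr_ge0.
have d01 : 0 <= delta <= 1 by rewrite !ltW.
have [nu nu0 mgf] := agree_matches_mgf_bound _ _ _ lam0 d01 ai_neq.
set th := r%:R * (1 + delta) / 2 in mgf *.
pose s x := ((\sum_(l < n) agree x i l)%N%:R : R).
apply: le_trans (@ler_expect _ _ _ prob01 _ (fun x =>
    expR (- (lam * ((1 + delta) * ((1 + delta) * pbn)))) *
    (expR (nu * th) * expR (lam * s x - nu * (matches x (a i))%:R))) _) _.
  move=> x; rewrite mulrA -!expRD -mulnb natrM [X in expR X](_ : _ =
    lam * (s x - pbn * (1 + delta) ^+ 2) + nu * (th - (matches x (a i))%:R)); last first.
    by rewrite /s; ring.
  by rewrite expRD ler_pM ?ler0n ?ler_indicator_expR.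
have mu0 : 0 <= (1 + delta) * pbn by rewrite mulr_ge0 //; lra.
rewrite !expectZ; apply: le_trans (@chernoff_bound _ _ _ _ mu0 d0 d1 mgf) _.
by rewrite ler_expR lerN2 ler_wpM2r ?invr_ge0 // ler_wpM2r ?sqr_ge0 // ler_peMl //; lra.
Qed.

Lemma similar_outsider_le_tails (T th : R) x :
  ([exists i, (a i != a i0) && (T <= (sim a b (omega_of x) i0 i)%:R)]%:R : R)
  <= \sum_(t | t != a i0) (th < (matches x t)%:R)%R%:R
   + \sum_(i | a i != a i0)
       ((T <= (\sum_(l < n) agree x i l)%N%:R) && ((matches x (a i))%:R <= th))%R%:R.
Proof.
have sum_ge0 (I : finType) (P Q : pred I) : 0 <= \sum_(i | P i) (Q i)%:R :> R.
  by apply: sumr_ge0 => i _; rewrite ler0n.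
case: existsP => [[i /andP[ai_neq]]|_]; last by rewrite addr_ge0.
rewrite sim_agree => T_le; have [M_le|M_gt] := leP (matches x (a i))%:R th.
  rewrite [X in _ + X](bigD1 i) //= T_le M_le /=.
  by rewrite addrCA lerDl addr_ge0 ?sum_ge0.
by rewrite (bigD1 (a i)) //= M_gt /= -addrA lerDl addr_ge0 ?sum_ge0.
Qed.

End Similarity.

Theorem lemma2 (R : realType) (r k n : nat) (a b : 'I_n -> 'I_r) (i0 : 'I_n)
  (p eps delta : R) :
  n = (r * k)%N ->
  (forall t : 'I_r, #|[pred u | a u == t]| = k) ->
  (forall t : 'I_r, #|[pred v | b v == t]| = k) ->
  0 <= p -> p < 1/2 -> 0 <= eps -> eps < 1 ->
  0 < delta -> delta < 1 ->
  let pb := (1 - eps) ^+ 2 / 2 in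
  Prob p eps (fun w : Omega r n =>
    [exists i : 'I_n, (a i != a i0) &&
       (n%:R * pb * (1 + delta) ^+ 2 <= (sim a b w i0 i)%:R)])
  <= (n - k)%:R * expR (- (n%:R * pb * delta ^+ 2 / 3))
     + 2 * r%:R * expR (- (r%:R * delta ^+ 2 / 6)).
Proof.
move=> n_eq a_card b_card p0 p1 eps0 eps1 d0 d1; rewrite [X in is_true X]/=.
have p01 : 0 <= p <= 1 by rewrite p0; lra.
have eps01 : 0 <= eps <= 1 by rewrite eps0 ltW.
have outsiders : #|[pred i | a i != a i0]| = (n - k)%N.
  have := cardC [pred i | a i == a i0]; rewrite a_card card_ord => card_split.
  by rewrite -[n in (n - k)%N]card_split addKn; apply: eq_card => i; rewrite !inE.
rewrite Prob_expect; apply: le_trans (ler_expect (site_prob01 p01 eps01) _ _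
  (fun x => similar_outsider_le_tails a b i0 _ (r%:R * (1 + delta) / 2) x)) _.
rewrite expectD !expect_sum addrC; apply: lerD.
  set e := expR _; apply: (@le_trans _ _ (\sum_(i | a i != a i0) e)).
    by apply: ler_sum => i; apply: agree_tail_few_matches.
  by rewrite (sumr_const [pred i | a i != a i0]) outsiders mulr_natl.
set e := expR _; apply: (@le_trans _ _ (\sum_(t | t != a i0) e)).
  by apply: ler_sum => t; apply: matches_tail.
rewrite (sumr_const [pred t | t != a i0]) -[e *+ _]mulr_natl ler_wpM2r ?expR_ge0 //.
by rewrite -natrM ler_nat (leq_trans (max_card _)) // card_ord leq_pmull.
Qed.
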